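(* Let $g:(0,\infty)\to(0,\infty)$ be a positive decreasing function with $\lim_{t\to+\infty}g(t)/g(2t)=2$ (respectively, $\lim_{t\to0+}g(t)/g(2t)=2$). Let $f\in L_\infty(0,\infty)$ be such that $\sup_{n\in\mathbb Z}\frac{1}{2^ng(2^n)}\left|\int_0^{2^n}f(s)\,ds\right|<\infty$. Then the sequence $$\left\{\frac{1}{2^ng(2^n)}\int_{2^n}^{2^{n+1}}f(s)\,ds\right\}_{n\in\mathbb Z}$$ belongs to $\mathrm{Range}(I-S_+)+c_0(\mathbb Z_+)$ (respectively, to $\mathrm{Range}(I-S_+)+c_0(\mathbb Z_-)$).
   Context: $\ell_\infty(\mathbb Z)$ is the space of bounded two-sided complex sequences, $(S_+x)_n=x_{n-1}$, and $\mathrm{Range}(I-S_+)=\{x-S_+x: x\in\ell_\infty(\mathbb Z)\}$. $c_0(\mathbb Z_+)$ denotes the set of $x\in\ell_\infty(\mathbb Z)$ with $x_n\to0$ as $n\to+\infty$, and $c_0(\mathbb Z_-)$ the set of $x\in\ell_\infty(\mathbb Z)$ with $x_n\to0$ as $n\to-\infty$. *)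

From HB Require Import structures.
From mathcomp Require Import all_boot all_order all_algebra.
From mathcomp Require Import all_classical all_reals all_analysis.
From mathcomp Require Import complex.
Set Implicit Arguments. Unset Strict Implicit. Unset Printing Implicit Defensive.
Import Order.TTheory GRing.Theory Num.Theory.
Import numFieldNormedType.Exports.
Local Open Scope classical_set_scope.
Local Open Scope ring_scope.

Section Defs.
Variable R : realType.
Local Notation C := (R[i]).

Definition linf (x : int -> C) : Prop := exists M : R, forall n, `|x n| <= M%:C%C.

Definition Splus (x : int -> C) : int -> C := fun n => x (n - 1).

Definition range_I_Splus (y : int -> C) : Prop :=
  exists x : int -> C, linf x /\ forall n, y n = x n - Splus x n.

Definition c0_plus (x : int -> C) : Prop :=
  linf x /\ forall e : R, 0 < e -> exists N : int, forall n, N <= n -> `|x n| < e%:C%C.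

Definition c0_minus (x : int -> C) : Prop :=
  linf x /\ forall e : R, 0 < e -> exists N : int, forall n, n <= N -> `|x n| < e%:C%C.

Definition Cint (f : R -> C) (a b : R) : C :=
  (\int[lebesgue_measure]_(s in `[a, b]) complex.Re (f s))%:C%C
  + 'i%C * (\int[lebesgue_measure]_(s in `[a, b]) complex.Im (f s))%:C%C.

Definition Linf_pos (f : R -> C) : Prop :=
  measurable_fun (`]0, +oo[ : set R) (fun s : R => complex.Re (f s)) /\
  measurable_fun (`]0, +oo[ : set R) (fun s : R => complex.Im (f s)) /\
  exists M : R, {ae lebesgue_measure, forall s, 0 < s -> `|f s| <= M%:C%C}.

End Defs.

From HB Require Import structures.
From mathcomp Require Import all_boot all_order all_algebra.
From mathcomp Require Import all_classical all_reals all_analysis.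
From mathcomp Require Import complex.
From mathcomp Require Import ring lra.
Set Implicit Arguments.
Unset Strict Implicit.
Unset Printing Implicit Defensive.
Import Order.TTheory GRing.Theory Num.Theory.
Import numFieldNormedType.Exports.
Local Open Scope classical_set_scope.
Local Open Scope ring_scope.

(* With F n = int_0^(2^n) f, w n = 2^n g(2^n) and the bounded sequence
   b n = F n / w n, one has
     a n = (F (n+1) - F n) / w n = (b (n+1) - b n) + b (n+1) (r n - 1),
   where r n = w (n+1) / w n = 2 g(2t) / g(t) at t = 2^n.  The first term lies
   in Range(I - S_+).  As g is nonincreasing, |r n - 1| <= 1 and
   |r n - 1| <= |2 - g(t) / g(2t)|, so the second term is bounded and tends to 0
   wherever g(t) / g(2t) tends to 2. *)

Lemma integrable_ae_bounded {R : realType} d (T : measurableType d)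
    (mu : {measure set T -> \bar R}) (D : set T) (h : T -> R) (M : R) :
  measurable D -> (mu D < +oo)%E -> measurable_fun D h ->
  {ae mu, forall x, D x -> `|h x| <= M} -> mu.-integrable D (EFin \o h).
Proof.
move=> mD finD mh hM.
apply/integrableP; split; first exact/measurable_realfun.measurable_EFinP.
apply: (le_lt_trans (integral_le_bound `|M|%:E _ _ _ _)) => //.
- exact/measurable_realfun.measurable_EFinP.
- apply: filterS hM => x hx Dx.
  by rewrite /= lee_fin (le_trans (hx Dx)) ?ler_norm.
- by rewrite lte_mul_pinfty.
Qed.

Section Cint_additivity.
Variable R : realType.
Local Notation mu := (@lebesgue_measure R).

Lemma integrable_itv_pos (h : R -> R) (M c : R) :
  measurable_fun (`]0, +oo[ : set R) h ->
  {ae mu, forall s, 0 < s -> `|h s| <= M} ->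
  mu.-integrable `]0, c] (EFin \o h).
Proof.
move=> mh hM.
apply: (@integrable_ae_bounded R _ (measurableTypeR R) mu `]0, c] h M) => //.
- by rewrite /= lebesgue_measure_itv /=; case: ifP => _; rewrite -?EFinD ?ltry.
- apply: (measurable_funS _ _ mh) => // x.
  by rewrite /= !in_itv /= andbT => /andP[].
- apply: filterS hM; first exact: (ae_filter_ringOfSetsType mu).
  by move=> x hx; rewrite /= in_itv /= => /andP[/hx].
Qed.

Lemma Rintegral_itv_split (h : R -> R) (M c x : R) : 0 < x -> x <= c ->
  measurable_fun (`]0, +oo[ : set R) h ->
  {ae mu, forall s, 0 < s -> `|h s| <= M} ->
  \int[mu]_(s in `[0, c]) h s =
  \int[mu]_(s in `[0, x]) h s + \int[mu]_(s in `[x, c]) h s.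
Proof.
move=> x0 xc mh hM.
have ic := @integrable_itv_pos h M c mh hM.
have sub a b : 0 <= a -> b <= c -> `]a, b] `<=` `]0, c].
  move=> a0 bc y; rewrite /= !in_itv /= => /andP[ay yb].
  by rewrite (le_lt_trans a0 ay) (le_trans yb bc).
rewrite -!Rintegral_itv_obnd_cbnd; last 3 first.
- by apply: integrableS ic => //; apply: sub.
- exact: ic.
- by apply: integrableS ic => //; apply: sub => //; apply: ltW.
by rewrite -(@Rintegral_itvB _ _ _ _ x ic) ?bnd_simp ?(ltW x0) // addrC subrK.
Qed.

Lemma normc_ge_Im (z : R[i]) : (`|complex.Im z|)%:C%C <= `|z|.
Proof. by rewrite normc_def lecR -sqrtr_sqr ler_wsqrtr // lerDr sqr_ge0. Qed.

Lemma Cint_split (f : R -> R[i]) (c x : R) : Linf_pos f -> 0 < x -> x <= c ->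
  Cint f 0 c = Cint f 0 x + Cint f x c.
Proof.
move=> [mRe [mIm [M hM]]] x0 xc.
have bound (p : R[i] -> R) : (forall z, (`|p z|)%:C%C <= `|z|) ->
    {ae mu, forall s, 0 < s -> `|p (f s)| <= M}.
  move=> pz; apply: filterS hM; first exact: (ae_filter_ringOfSetsType mu).
  move=> s hs /hs fM.
  by rewrite -lecR (le_trans (pz _) fM).
rewrite /Cint (Rintegral_itv_split x0 xc mRe (bound _ (@normc_ge_Re R))).
rewrite (Rintegral_itv_split x0 xc mIm (bound _ normc_ge_Im)).
by rewrite !rmorphD /=; ring.
Qed.

End Cint_additivity.

Section bounded_sequences.
Variable R : realType.
Local Notation C := (R[i]).
Implicit Types (u v : int -> C) (x y : C).

Lemma normcR (k : R) : `|k%:C%C| = (`|k|)%:C%C.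
Proof. by rewrite normc_def /= expr0n addr0 sqrtr_sqr. Qed.

Lemma linf_ge0 u (M : R) : (forall n, `|u n| <= M%:C%C) -> 0 <= M.
Proof. by move=> uM; rewrite -ler0c (le_trans _ (uM 0)). Qed.

Lemma range_I_Splus_diff u : linf u -> range_I_Splus (fun n => u (n + 1) - u n).
Proof.
move=> [M uM]; exists (fun n => u (n + 1)); split=> [|n]; first by exists M.
by rewrite /Splus subrK.
Qed.

Lemma normM_lt x y (M e : R) : 0 <= M -> `|x| <= M%:C%C ->
  `|y| < (e / (M + 1))%:C%C -> `|x * y| < e%:C%C.
Proof.
move=> M0 xM ye; have M1 : 0 < M + 1 by rewrite ltr_wpDl.
have xM1 : `|x| <= (M + 1)%:C%C by rewrite (le_trans xM) // lecR lerDl.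
rewrite normrM (le_lt_trans (ler_wpM2r (normr_ge0 y) xM1)) //.
have -> : e = (M + 1) * (e / (M + 1)) by rewrite mulrC mulfVK ?lt0r_neq0.
by rewrite rmorphM ltr_pM2l // ltcR.
Qed.

Lemma linf_mul u v : linf u -> linf v -> linf (u \* v).
Proof.
move=> [M uM] [N vN]; exists (M * N) => n.
by rewrite normrM rmorphM ler_pM.
Qed.

Lemma c0_plus_mul u v : linf u -> c0_plus v -> c0_plus (u \* v).
Proof.
move=> [M uM] [vb v0]; split; first by apply: linf_mul vb; exists M.
have M0 := linf_ge0 uM.
move=> e e0; have [k vk] := v0 _ (divr_gt0 e0 (ltr_wpDl M0 ltr01)).
by exists k => n kn; apply: normM_lt M0 (uM n) (vk n kn).
Qed.

Lemma c0_minus_mul u v : linf u -> c0_minus v -> c0_minus (u \* v).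
Proof.
move=> [M uM] [vb v0]; split; first by apply: linf_mul vb; exists M.
have M0 := linf_ge0 uM.
move=> e e0; have [k vk] := v0 _ (divr_gt0 e0 (ltr_wpDl M0 ltr01)).
by exists k => n kn; apply: normM_lt M0 (uM n) (vk n kn).
Qed.

End bounded_sequences.

Section dyadic_limits.
Variable R : realType.
Implicit Types (h : R -> R) (l : R).

Lemma exists_exp2_gt (x : R) : exists k : nat, x < 2 ^+ k.
Proof.
exists (Num.Def.archi_bound `|x|).
apply: le_lt_trans (ler_norm x) (lt_le_trans (archi_boundP (normr_ge0 x)) _).
by rewrite -natrX ler_nat ltnW // ltn_expl.
Qed.

Lemma cvgy_pow2 h l : h @ +oo --> l ->
  forall e, 0 < e -> exists N : int, forall n, N <= n -> `|l - h (2 ^ n)| < e.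
Proof.
move=> hl e e0; have [M [_ hM]] := cvgr_dist_lt _ _ hl _ e0.
have [k Mk] := exists_exp2_gt M.
exists k%:Z => n kn; apply: hM; apply: lt_le_trans Mk _.
by rewrite exprnP ler_weXz2l // ler1n.
Qed.

Lemma cvg0r_pow2 h l : h @ (0 : R)^'+ --> l ->
  forall e, 0 < e -> exists N : int, forall n, n <= N -> `|l - h (2 ^ n)| < e.
Proof.
move=> hl e e0; have [d /= d0 hd] := cvgr_dist_lt _ _ hl _ e0.
have [k dk] := exists_exp2_gt d^-1.
exists (- k%:Z) => n nk; apply: hd; last exact: exprz_gt0.
rewrite /ball_ /= sub0r normrN gtr0_norm ?exprz_gt0 //.
apply: le_lt_trans (ler_weXz2l _ nk) _; first by rewrite ler1n.
by rewrite -invr_expz -exprnP -[d]invrK ltf_pV2 ?posrE ?exprn_gt0 ?invr_gt0.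
Qed.

End dyadic_limits.

Lemma double_ratio_bounds (R : realFieldType) (u v : R) : 0 < v -> v <= u ->
  `|2 * v / u - 1| <= 1 /\ `|2 * v / u - 1| <= `|2 - u / v|.
Proof.
move=> v0 vu; have u0 : 0 < u by apply: lt_le_trans vu.
have -> : 2 * v / u - 1 = (2 * v - u) / u by field; rewrite gt_eqF.
have -> : 2 - u / v = (2 * v - u) / v by field; rewrite gt_eqF.
rewrite !normrM !normfV !(gtr0_norm u0) !(gtr0_norm v0); split.
  by rewrite ler_pdivrMr // mul1r ler_norml; apply/andP; split; lra.
by rewrite ler_wpM2l ?normr_ge0 // lef_pV2 ?posrE.
Qed.

Section dyadic_decomposition.
Variables (R : realType) (g : R -> R) (f : R -> R[i]).
Hypothesis g_gt0 : forall t, 0 < t -> 0 < g t.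
Hypothesis g_nonincr : forall s t, 0 < s -> s <= t -> g t <= g s.

Definition dyadic_mean (n : int) : R[i] :=
  Cint f 0 (2 ^ n) / (2 ^ n * g (2 ^ n))%:C%C.

Definition dyadic_ratio (n : int) : R := 2 * g (2 * 2 ^ n) / g (2 ^ n).

Let pow2_gt0 (n : int) : 0 < (2 : R) ^ n. Proof. exact: exprz_gt0. Qed.

Let pow2S (n : int) : (2 : R) ^ (n + 1) = 2 * 2 ^ n.
Proof. by rewrite expfzDr // mulrC. Qed.

Lemma dyadic_block_decomp n : Linf_pos f ->
  Cint f (2 ^ n) (2 ^ (n + 1)) / (2 ^ n * g (2 ^ n))%:C%C =
  (dyadic_mean (n + 1) - dyadic_mean n) +
  dyadic_mean (n + 1) * (dyadic_ratio n - 1)%:C%C.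
Proof.
move=> hf; have le_pow2S : 2 ^ n <= (2 : R) ^ (n + 1).
  by rewrite pow2S ler_peMl ?ler1n // ltW.
rewrite /dyadic_mean /dyadic_ratio (Cint_split hf (pow2_gt0 n) le_pow2S).
rewrite pow2S !rmorphM rmorphB rmorph1 rmorphM fmorphV rmorphM rmorph_nat.
by field; rewrite !fmorph_eq0 !gt_eqF ?g_gt0 ?mulr_gt0.
Qed.

Lemma linf_dyadic_mean :
  (exists K : R, forall n : int,
      `|Cint f 0 (2 ^ n)| / ((2 ^ n * g (2 ^ n))%:C%C) <= K%:C%C) ->
  linf dyadic_mean.
Proof.
move=> [K hK]; exists K => n.
by rewrite normrM normfV [`|_%:C%C|]gtr0_norm ?ltcR ?mulr_gt0 ?g_gt0.
Qed.

Lemma dyadic_ratio_bounds n :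
  `|dyadic_ratio n - 1| <= 1 /\
  `|dyadic_ratio n - 1| <= `|2 - g (2 ^ n) / g (2 * 2 ^ n)|.
Proof.
apply: double_ratio_bounds; first by rewrite g_gt0 ?mulr_gt0.
by rewrite g_nonincr // ler_peMl ?ler1n // ltW.
Qed.

Let ratio_dev (n : int) : R[i] := (dyadic_ratio n - 1)%:C%C.

Let linf_ratio_dev : linf ratio_dev.
Proof. by exists 1 => n; rewrite normcR lecR (dyadic_ratio_bounds n).1. Qed.

Lemma c0_plus_dyadic_ratio :
  (fun t => g t / g (2 * t)) @ +oo --> (2 : R) -> c0_plus ratio_dev.
Proof.
move=> g2; split=> // e /(cvgy_pow2 g2)[N hN]; exists N => n /hN.
by rewrite normcR ltcR; apply: le_lt_trans (dyadic_ratio_bounds n).2.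
Qed.

Lemma c0_minus_dyadic_ratio :
  (fun t => g t / g (2 * t)) @ (0 : R)^'+ --> (2 : R) -> c0_minus ratio_dev.
Proof.
move=> g2; split=> // e /(cvg0r_pow2 g2)[N hN]; exists N => n /hN.
by rewrite normcR ltcR; apply: le_lt_trans (dyadic_ratio_bounds n).2.
Qed.

End dyadic_decomposition.

Theorem lemma2p14 (R : realType) (g : R -> R) (f : R -> R[i]) :
  (forall t, 0 < t -> 0 < g t) ->
  (forall s t, 0 < s -> s <= t -> g t <= g s) ->
  Linf_pos f ->
  (exists K : R, forall n : int,
      `|Cint f 0 (2 ^ n)| / ((2 ^ n * g (2 ^ n))%:C%C) <= K%:C%C) ->
  let a := fun n : int =>
    Cint f (2 ^ n) (2 ^ (n + 1)) / ((2 ^ n * g (2 ^ n))%:C%C) in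
  (((fun t : R => g t / g (2 * t)) @ +oo --> (2 : R)) ->
     exists y z, range_I_Splus y /\ c0_plus z /\ a = y \+ z) /\
  (((fun t : R => g t / g (2 * t)) @ (0 : R)^'+ --> (2 : R)) ->
     exists y z, range_I_Splus y /\ c0_minus z /\ a = y \+ z).
Proof.
move=> g_gt0 g_nonincr hf hK a.
pose b := dyadic_mean g f; pose u n := (dyadic_ratio g n - 1)%:C%C.
pose y n := b (n + 1) - b n; pose z n := b (n + 1) * u n.
have [K bK] : linf b by exact: linf_dyadic_mean.
have b1K : linf (fun n => b (n + 1)) by exists K.
have y_range : range_I_Splus y by apply: range_I_Splus_diff; exists K.
have aE : a = y \+ z by apply: funext => n; exact: dyadic_block_decomp.
split=> g2; exists y, z; split=> //; split=> //.
- exact: c0_plus_mul b1K (c0_plus_dyadic_ratio g_gt0 g_nonincr g2).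
- exact: c0_minus_mul b1K (c0_minus_dyadic_ratio g_gt0 g_nonincr g2).
Qed.
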